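(* Let $1<q<\infty$, $\alpha,\beta\in\mathbb R$, and let $f\in\mathbb M^2\cap\mathbb W_q^{\alpha,\beta}$ be nonnegative on $[-1,1]$. Then $f^q\in\mathbb M^2\cap\mathbb W_1^{q\alpha,q\beta}$, and for every $\delta>0$, \[ \omega_\varphi^2(f,\delta)_{w_{\alpha,\beta},q}\le c\,\omega_\varphi^2(f^q,\delta)_{w_{q\alpha,q\beta},1}^{1/q}, \] with $c$ independent of $f$ and $\delta$.
   Context: For $x\in[-1,1]$, $\varphi(x)=\sqrt{1-x^2}$, $w_{\alpha,\beta}(x)=(1+x)^\alpha(1-x)^\beta$. $\|g\|_{L_q(S)}$ is the $L_q$ norm over $S$; $\mathbb W_q^{\alpha,\beta}=\{f:\|w_{\alpha,\beta}f\|_{L_q[-1,1]}<\infty\}$. $\Delta_h^2(f,x)=f(x-h)-2f(x)+f(x+h)$ if $x\pm h\in[-1,1]$, else $0$; $\overrightarrow\Delta_h^2(f,x)=\Delta_h^2(f,x+h)$, $\overleftarrow\Delta_h^2(f,x)=\Delta_h^2(f,x-h)$. For a weight $w$: $\Omega_\varphi^2(f,\delta)_{w,q}=\sup_{0<h\le\delta}\|w(x)\Delta^2_{h\varphi(x)}(f,x)\|_{L_q[-1+8h^2,1-8h^2]}$, $\overrightarrow\Omega_\varphi^2(f,\delta)_{w,q}=\sup_{0<h\le8\delta^2}\|w\overrightarrow\Delta_h^2(f,\cdot)\|_{L_q[-1,-1+8\delta^2]}$, $\overleftarrow\Omega_\varphi^2(f,\delta)_{w,q}=\sup_{0<h\le8\delta^2}\|w\overleftarrow\Delta_h^2(f,\cdot)\|_{L_q[1-8\delta^2,1]}$,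 $\omega_\varphi^2=\Omega_\varphi^2+\overrightarrow\Omega_\varphi^2+\overleftarrow\Omega_\varphi^2$. $\mathbb M^2$ is the set of convex functions on $(-1,1)$ (all second divided differences nonnegative). *)

From HB Require Import structures.
From mathcomp Require Import all_boot all_order all_algebra.
From mathcomp Require Import all_classical all_reals all_analysis.
Set Implicit Arguments. Unset Strict Implicit. Unset Printing Implicit Defensive.
Import Order.TTheory GRing.Theory Num.Theory.
Local Open Scope classical_set_scope.
Local Open Scope ring_scope.

Section Defs.
Variable R : realType.

Definition phi (x : R) : R := Num.sqrt (1 - x ^+ 2).

Definition wab (a b : R) (x : R) : R := ((1 + x) `^ a) * ((1 - x) `^ b).

Definition LqS (S : set R) (q : R) (g : R -> R) : \bar R :=
  ((\int[@lebesgue_measure R]_(x in S) ((`|g x| `^ q)%:E)) `^ q^-1)%E.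

Definition inW (q a b : R) (f : R -> R) : Prop :=
  (LqS `[(-1)%R, 1%R] q (fun x => (wab a b x * f x)%R) < +oo)%E.

(* M^2 : convex on (-1,1), i.e. all second divided differences nonnegative *)
Definition M2 (f : R -> R) : Prop :=
  forall x y z : R, -1 < x -> x < y -> y < z -> z < 1 ->
    0 <= ((f z - f y) / (z - y) - (f y - f x) / (y - x)) / (z - x).

Definition Delta2 (f : R -> R) (h x : R) : R :=
  if (-1 <= x - h) && (x + h <= 1) then f (x - h) - 2 * f x + f (x + h) else 0.

Definition Delta2f (f : R -> R) (h x : R) : R := Delta2 f h (x + h).
Definition Delta2b (f : R -> R) (h x : R) : R := Delta2 f h (x - h).

Definition Omega2 (w : R -> R) (q : R) (f : R -> R) (delta : R) : \bar R :=
  ereal_sup [set LqS `[-1 + 8 * h ^+ 2, 1 - 8 * h ^+ 2] q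
                   (fun x => w x * Delta2 f (h * phi x) x) | h in `]0, delta]].

Definition Omega2f (w : R -> R) (q : R) (f : R -> R) (delta : R) : \bar R :=
  ereal_sup [set LqS `[-1, -1 + 8 * delta ^+ 2] q
                   (fun x => w x * Delta2f f h x) | h in `]0, 8 * delta ^+ 2]].

Definition Omega2b (w : R -> R) (q : R) (f : R -> R) (delta : R) : \bar R :=
  ereal_sup [set LqS `[1 - 8 * delta ^+ 2, 1] q
                   (fun x => w x * Delta2b f h x) | h in `]0, 8 * delta ^+ 2]].

Definition omega2 (w : R -> R) (q : R) (f : R -> R) (delta : R) : \bar R :=
  (Omega2 w q f delta + Omega2f w q f delta + Omega2b w q f delta)%E.

End Defs.

From HB Require Import structures.
From mathcomp Require Import all_boot all_order all_algebra.
From mathcomp Require Import all_classical all_reals all_analysis.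
From mathcomp Require Import ring lra.
Set Implicit Arguments. Unset Strict Implicit. Unset Printing Implicit Defensive.
Import Order.TTheory GRing.Theory Num.Theory HBNNSimple.
Local Open Scope classical_set_scope.
Local Open Scope ring_scope.

(* For nonnegative A, B, C with 2B <= A + C and q >= 1,
   (A - 2B + C)^q <= 2^(q-1) (A^q - 2B^q + C^q): write A - 2B + C = 2(m - B)
   with m the midpoint of A and C; superadditivity of t^q gives
   (m - B)^q <= m^q - B^q, and convexity of t^q gives m^q <= (A^q + C^q)/2.
   Applied to the values of a nonnegative convex f, this bounds the weighted
   second differences of f pointwise by those of f^q, with w_{a,b}^q =
   w_{qa,qb}.  Integrating, taking q-th roots and suprema over the step sizes
   bounds each of the three parts of omega_phi^2, whence c = 3 2^((q-1)/q).
   Convexity is only assumed on (-1,1), so the pointwise bound may fail where a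
   difference node hits +-1; for each step size this happens at finitely many
   points, which the integrals do not see. *)

(* Unlike [ge0_le_integral] and [ge0_integralZl], the next two lemmas need no
   measurability: they compare the suprema over nonnegative simple functions. *)
Lemma ge0_le_integral_null d (T : measurableType d) (R : realType)
    (mu : {measure set T -> \bar R}) (D N : set T) (f g : T -> \bar R) :
  measurable N -> mu N = 0%E ->
  (forall x, D x -> (0 <= f x)%E) -> (forall x, D x -> (0 <= g x)%E) ->
  (forall x, D x -> ~ N x -> (f x <= g x)%E) ->
  (\int[mu]_(x in D) f x <= \int[mu]_(x in D) g x)%E.
Proof.
move=> mN N0 f0 g0 fg; rewrite (ge0_integralE _ f0) (ge0_integralE _ g0).
apply: ge_ereal_sup => _ [h /= hf <-].
have mCN : measurable (~` N) by exact: measurableC.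
pose hN := mul_nnsfun h (indic_nnsfun R mCN).
have -> : sintegral mu h = sintegral mu hN.
  rewrite -!integralT_nnsfun; apply: ae_eq_integral => //.
  - by apply/measurable_realfun.measurable_EFinP; exact: measurable_funP.
  - by apply/measurable_realfun.measurable_EFinP; exact: measurable_funP.
  - exists N; split => // x /= hx; apply: contrapT => Nx; apply: hx => _.
    by rewrite /hN /= measurable_realfun.mindicE mem_set // mulr1.
apply: ereal_sup_ubound; exists hN => //= x.
rewrite /hN /= measurable_realfun.mindicE.
have [Nx|Nx] := pselect (N x).
  rewrite memNset ?mulr0; last by move=> /(_ Nx).
  by rewrite /patch; case: ifP => // /[1!inE] Dx; exact: g0.
rewrite mem_set // mulr1; apply: (le_trans (hf x)).
by rewrite /patch; case: ifP => // /[1!inE] Dx; exact: fg.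
Qed.

Lemma ge0_integralZl_le d (T : measurableType d) (R : realType)
    (mu : {measure set T -> \bar R}) (D : set T) (g : T -> \bar R) (K : R) :
  0 < K -> (forall x, D x -> (0 <= g x)%E) ->
  (\int[mu]_(x in D) (K%:E * g x) <= K%:E * \int[mu]_(x in D) g x)%E.
Proof.
move=> K0 g0.
have Kg0 x : D x -> (0 <= K%:E * g x)%E.
  by move=> Dx; apply: mule_ge0; [rewrite lee_fin ltW | exact: g0].
rewrite (ge0_integralE _ Kg0) (ge0_integralE _ g0).
apply: ge_ereal_sup => _ [h /= hf <-].
have Ki0 : 0 <= K^-1 by rewrite invr_ge0 ltW.
pose hK := scale_nnsfun h Ki0.
have -> : sintegral mu h = (K%:E * sintegral mu hK)%E.
  rewrite -sintegralrM; apply: eq_sintegral => x /=.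
  by rewrite mulrA mulfV ?gt_eqF // mul1r.
rewrite lee_pmul2l ?lte_fin //; apply: ereal_sup_ubound; exists hK => //= x.
move: (hf x); rewrite /patch; case: ifP => _ /=; last first.
  by rewrite lee_fin => H; rewrite (_ : point = 0%E) // lee_fin mulr_ge0_le0.
case: (g x) => [r||] /=.
- by rewrite -EFinM !lee_fin => H; rewrite ler_pdivrMl // mulrC.
- by rewrite leey.
- by rewrite mulrNy gtr0_sg // mul1e leeNy_eq => /eqP.
Qed.

Lemma ereal_sup_ge0 (R : realType) (A : set R) (G : R -> \bar R) (h0 : R) :
  A h0 -> (forall h, (0 <= G h)%E) -> (0 <= ereal_sup [set G h | h in A])%E.
Proof.
by move=> Ah0 G0; apply: le_trans (G0 h0) _; apply: ereal_sup_ubound; exists h0.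
Qed.

Lemma ereal_sup_le_powe (R : realType) (A : set R) (F G : R -> \bar R) (k r : R) :
  0 < k -> 0 <= r -> (forall h, A h -> (0 <= G h)%E) ->
  (forall h, A h -> (F h <= k%:E * G h `^ r)%E) ->
  (ereal_sup [set F h | h in A] <= k%:E * ereal_sup [set G h | h in A] `^ r)%E.
Proof.
move=> k0 r0 G0 FG; apply: ge_ereal_sup => _ [h Ah <-].
apply: (le_trans (FG h Ah)); apply: lee_wpmul2l; first by rewrite lee_fin ltW.
have Gs : (G h <= ereal_sup [set G h | h in A])%E by apply: ereal_sup_ubound; exists h.
have Gh0 := G0 h Ah.
by apply: gt0_ler_poweR; rewrite // in_itv /= leey andbT ?(le_trans Gh0 Gs).
Qed.

Lemma adde3_le_powe (R : realType) (O1 O2 O3 P1 P2 P3 : \bar R) (k r : R) :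
  0 < k -> 0 <= r -> (0 <= P1)%E -> (0 <= P2)%E -> (0 <= P3)%E ->
  (O1 <= k%:E * P1 `^ r)%E -> (O2 <= k%:E * P2 `^ r)%E -> (O3 <= k%:E * P3 `^ r)%E ->
  (O1 + O2 + O3 <= (3 * k)%:E * (P1 + P2 + P3) `^ r)%E.
Proof.
move=> k0 r0 P10 P20 P30 H1 H2 H3.
have k0' : (0 <= k%:E)%E by rewrite lee_fin ltW.
have le_sum P : (0 <= P)%E -> (P <= P1 + P2 + P3)%E ->
    (k%:E * P `^ r <= k%:E * (P1 + P2 + P3) `^ r)%E.
  move=> P0 PS; apply: lee_wpmul2l => //.
  by apply: gt0_ler_poweR; rewrite // in_itv /= leey andbT ?adde_ge0.
have -> : ((3 * k)%:E = k%:E + k%:E + k%:E)%E by rewrite -!EFinD; congr EFin; ring.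
rewrite !ge0_muleDl ?adde_ge0 //; apply: leeD; first apply: leeD.
- by apply: (le_trans H1); apply: le_sum; rewrite // -addeA leeDl ?adde_ge0.
- by apply: (le_trans H2); apply: le_sum; rewrite // addeAC leeDr ?adde_ge0.
- by apply: (le_trans H3); apply: le_sum; rewrite // leeDr ?adde_ge0.
Qed.

Lemma LqS_ge0 (R : realType) (S : set R) (p : R) (g : R -> R) : (0 <= LqS S p g)%E.
Proof. exact: poweR_ge0. Qed.

Lemma LqS_le_off_finite (R : realType) (S N : set R) (p K : R) (g1 g2 : R -> R) :
  0 < p -> 0 < K -> finite_set N ->
  (forall x, ~ N x -> `|g1 x| `^ p <= K * `|g2 x| `^ 1) ->
  (LqS S p g1 <= (K `^ p^-1)%:E * LqS S 1 g2 `^ p^-1)%E.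
Proof.
move=> p0 K0 /finite_set_countable cN g12.
have mN : measurable N by apply: countable_measurable => // x; exact: measurable_set1.
have int_ge0 (g : R -> R) r :
    (0 <= \int[@lebesgue_measure R]_(x in S) (`|g x| `^ r)%:E)%E.
  by apply: integral_ge0 => x _; rewrite lee_fin powR_ge0.
have K0' : (0 <= K%:E)%E by rewrite lee_fin ltW.
rewrite /LqS invr1 poweRe1 // -poweR_EFin -poweRM //.
apply: gt0_ler_poweR; rewrite ?invr_ge0 ?(ltW p0) ?in_itv /= ?leey ?andbT ?mule_ge0 //.
apply: (le_trans _ (@ge0_integralZl_le _ _ _ lebesgue_measure S
  (fun x => (`|g2 x| `^ 1)%:E) K K0 _)); last by move=> x _; rewrite lee_fin powR_ge0.
apply: (@ge0_le_integral_null _ _ _ (@lebesgue_measure R) S N) => //.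
- exact: countable_lebesgue_measure0.
- by move=> x _; rewrite -EFinM lee_fin mulr_ge0 ?powR_ge0 ?ltW.
- by move=> x _ Nx; rewrite -EFinM lee_fin g12.
Qed.

Lemma powR_superadditive (R : realType) (p x y : R) : 1 <= p -> 0 <= x -> 0 <= y ->
  x `^ p + y `^ p <= (x + y) `^ p.
Proof.
move=> p1 x0 y0; have p0 : 0 < p by rewrite (lt_le_trans _ p1).
have [->|_] := eqVneq x 0; first by rewrite add0r powR0 ?gt_eqF // add0r.
have xy0 : 0 <= x + y by rewrite addr_ge0.
rewrite -(mulr_powRB1 x0 p0) -(mulr_powRB1 y0 p0) -(mulr_powRB1 xy0 p0) mulrDl.
have p1' : 0 <= p - 1 by rewrite subr_ge0.
by rewrite lerD // ler_wpM2l // ge0_ler_powR // ?nnegrE // ?lerDl ?lerDr.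
Qed.

Lemma powR_convex (R : realType) (p t x y : R) :
  1 <= p -> 0 <= x -> 0 <= y -> 0 <= t -> t <= 1 ->
  (t * x + (1 - t) * y) `^ p <= t * x `^ p + (1 - t) * y `^ p.
Proof.
move=> p1 x0 y0 t0 t1; move: (convex_powR p1 (Itv01 t0 t1)) => /(_ x y).
by rewrite !inE /= !in_itv /= !andbT => /(_ x0 y0); rewrite !convRE.
Qed.

Lemma powR_second_diff_le (R : realType) (p A B C : R) :
  1 <= p -> 0 <= A -> 0 <= B -> 0 <= C -> 2 * B <= A + C ->
  (A - 2 * B + C) `^ p <= 2 `^ (p - 1) * (A `^ p - 2 * B `^ p + C `^ p).
Proof.
move=> p1 A0 B0 C0 BAC; have p0 : 0 < p by rewrite (lt_le_trans _ p1).
set m := (A + C) / 2.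
have mB0 : 0 <= m - B by rewrite subr_ge0 /m ler_pdivlMr // mulrC.
have m_convex : m `^ p <= 2^-1 * A `^ p + 2^-1 * C `^ p.
  have h0 : (0 : R) <= 2^-1 by rewrite invr_ge0.
  have h1 : (2^-1 : R) <= 1 by rewrite invf_le1 ?ler1n.
  have half : 1 - 2^-1 = 2^-1 :> R by field.
  have mE : 2^-1 * A + 2^-1 * C = m by rewrite /m; field.
  by have := powR_convex p1 A0 C0 h0 h1; rewrite half mE.
have := powR_superadditive p1 B0 mB0; rewrite [B + _]addrC subrK => m_superadd.
have -> : A - 2 * B + C = 2 * (m - B) by rewrite /m; field.
rewrite powRM // -(mulr_powRB1 (ler0n _ 2) p0) -mulrA mulrCA ler_wpM2l ?powR_ge0 //.
have -> : A `^ p - 2 * B `^ p + C `^ p = 2 * (2^-1 * A `^ p + 2^-1 * C `^ p - B `^ p).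
  by field.
by rewrite ler_wpM2l // lerBrDr addrC (le_trans m_superadd).
Qed.

Lemma divided_diff2_ge0E (R : realType) (x y z gx gy gz : R) : x < y -> y < z ->
  (0 <= ((gz - gy) / (z - y) - (gy - gx) / (y - x)) / (z - x)) =
  ((z - x) * gy <= (z - y) * gx + (y - x) * gz).
Proof.
move=> xy yz; have yx0 : 0 < y - x by rewrite subr_gt0.
have zy0 : 0 < z - y by rewrite subr_gt0.
have zx0 : 0 < z - x by rewrite subr_gt0 (lt_trans xy).
have -> : ((gz - gy) / (z - y) - (gy - gx) / (y - x)) / (z - x) =
    ((z - y) * gx + (y - x) * gz - (z - x) * gy) / ((y - x) * (z - y) * (z - x)).
  by field; rewrite !gt_eqF.
by rewrite pmulr_lge0 ?invr_gt0 ?mulr_gt0 // subr_ge0.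
Qed.

Lemma wab_powR (R : realType) (q a b y : R) : -1 <= y <= 1 ->
  wab a b y `^ q = wab (q * a) (q * b) y.
Proof.
move=> /andP[y1 y2]; have y1' : 0 <= 1 + y by rewrite -lerBlDl sub0r.
have y2' : 0 <= 1 - y by rewrite subr_ge0.
by rewrite /wab powRM ?powR_ge0 // -!powRrM [a * q]mulrC [b * q]mulrC.
Qed.

(* [x - h phi x = -1] forces [(1 + x)^2 = h^2 (1 - x^2)], i.e. [x = -1] or
   [x = (h^2 - 1)/(h^2 + 1)]; symmetrically at [1]. *)
Lemma phi_step_interior (R : realType) (h x : R) :
  ~ [set -1; 1; (h ^+ 2 - 1) / (h ^+ 2 + 1); (1 - h ^+ 2) / (1 + h ^+ 2)] x ->
  x - h * phi x != -1 /\ x + h * phi x != 1.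
Proof.
move=> Nx; have h2 : 0 < 1 + h ^+ 2 by rewrite ltr_pwDl // sqr_ge0.
have nm1 : x != -1 by apply/eqP => e; apply: Nx; left; left; left.
have n1 : x != 1 by apply/eqP => e; apply: Nx; left; left; right.
have np : x != (h ^+ 2 - 1) / (h ^+ 2 + 1) by apply/eqP => e; apply: Nx; left; right.
have nq : x != (1 - h ^+ 2) / (1 + h ^+ 2) by apply/eqP => e; apply: Nx; right.
rewrite /phi; set s := Num.sqrt (1 - x ^+ 2).
have [s2|s0] : s ^+ 2 = 1 - x ^+ 2 \/ s = 0.
  have [le|lt] := lerP 0 (1 - x ^+ 2); first by left; rewrite /s sqr_sqrtr.
  by right; rewrite /s ler0_sqrtr // ltW.
- split; apply/eqP => e.
  + have e' : x + 1 = h * s by lra.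
    have : (x + 1) * ((1 + h ^+ 2) * x - (h ^+ 2 - 1)) = (h * s) ^+ 2 - h ^+ 2 * s ^+ 2.
      by rewrite -e' s2; ring.
    rewrite exprMn subrr => /eqP; rewrite mulf_eq0 addr_eq0 (negPf nm1) subr_eq0 /=.
    by move=> /eqP E; move/eqP: np; apply; rewrite -E [h ^+ 2 + 1]addrC; field; rewrite gt_eqF.
  + have e' : 1 - x = h * s by lra.
    have : (1 - x) * ((1 - h ^+ 2) - (1 + h ^+ 2) * x) = (h * s) ^+ 2 - h ^+ 2 * s ^+ 2.
      by rewrite -e' s2; ring.
    rewrite exprMn subrr => /eqP; rewrite mulf_eq0 subr_eq0 eq_sym (negPf n1) subr_eq0 /=.
    by move=> /eqP E; move/eqP: nq; apply; rewrite E; field; rewrite gt_eqF.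
- by split; apply/eqP => e; [move/eqP: nm1 | move/eqP: n1]; apply; move: e; rewrite s0 mulr0; lra.
Qed.

Section ConvexPower.
Variables (R : realType) (q : R) (f : R -> R).
Hypotheses (q_ge1 : 1 <= q) (f_convex : M2 f)
  (f_ge0 : forall x : R, -1 <= x <= 1 -> 0 <= f x).

Let q_gt0 : 0 < q. Proof. by rewrite (lt_le_trans _ q_ge1). Qed.

Lemma M2_powR : M2 (fun x => f x `^ q).
Proof.
move=> x y z x1 xy yz z1; move: (f_convex x1 xy yz z1); rewrite !divided_diff2_ge0E //.
have zx0 : 0 < z - x by rewrite subr_gt0 (lt_trans xy).
have fx0 : 0 <= f x by apply: f_ge0; apply/andP; split; lra.
have fy0 : 0 <= f y by apply: f_ge0; apply/andP; split; lra.
have fz0 : 0 <= f z by apply: f_ge0; apply/andP; split; lra.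
set t := (z - y) / (z - x).
have t0 : 0 <= t by rewrite divr_ge0 ?ltW // subr_gt0.
have t1 : t <= 1 by rewrite ler_pdivrMr // mul1r; lra.
have t1E : 1 - t = (y - x) / (z - x) by rewrite /t; field; rewrite gt_eqF.
have combE (u v : R) : (z - y) * u + (y - x) * v = (t * u + (1 - t) * v) * (z - x).
  by rewrite t1E /t; field; rewrite gt_eqF.
rewrite !combE ![(z - x) * _]mulrC !ler_pM2r // => fy_le.
apply: le_trans (powR_convex q_ge1 fx0 fz0 t0 t1).
by apply: ge0_ler_powR; rewrite ?nnegrE ?(ltW q_gt0) // (le_trans fy0 fy_le).
Qed.

Lemma M2_midpoint (s y : R) : 0 <= s -> -1 < y - s -> y + s < 1 ->
  2 * f y <= f (y - s) + f (y + s).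
Proof.
move=> s0 l r; have [->|s_neq0] := eqVneq s 0; first by rewrite subr0 addr0 -mulr2n mulr_natl.
have s_gt0 : 0 < s by rewrite lt_neqAle eq_sym s_neq0.
have ly : y - s < y by rewrite ltrBlDr ltrDl.
have yr : y < y + s by rewrite ltrDl.
move: (f_convex l ly yr r); rewrite divided_diff2_ge0E //.
have -> : y + s - (y - s) = s * 2 by ring.
have -> : y + s - y = s by ring.
have -> : y - (y - s) = s by ring.
by rewrite -mulrA -mulrDr ler_pM2l // mulrC.
Qed.

Lemma Delta2_powR_le (s y : R) : 0 <= s -> y - s != -1 -> y + s != 1 ->
  `|Delta2 f s y| `^ q <= 2 `^ (q - 1) * `|Delta2 (fun x => f x `^ q) s y|.
Proof.
move=> s0 yl yr; rewrite /Delta2; case: ifP => [/andP[l r]|_]; last first.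
  by rewrite normr0 powR0 ?gt_eqF // mulr_ge0 ?powR_ge0.
have l' : -1 < y - s by rewrite lt_neqAle eq_sym yl.
have r' : y + s < 1 by rewrite lt_neqAle yr.
have A0 : 0 <= f (y - s) by apply: f_ge0; apply/andP; split; lra.
have B0 : 0 <= f y by apply: f_ge0; apply/andP; split; lra.
have C0 : 0 <= f (y + s) by apply: f_ge0; apply/andP; split; lra.
have mid := M2_midpoint s0 l' r'.
rewrite ger0_norm; last by lra.
apply: le_trans (powR_second_diff_le q_ge1 A0 B0 C0 mid) _.
by rewrite ler_wpM2l ?powR_ge0 // ler_norm.
Qed.

Lemma wab_Delta2_powR_le (a b s y z : R) : 0 <= s -> y - s != -1 -> y + s != 1 ->
  ((-1 <= y - s) && (y + s <= 1) -> -1 <= z <= 1) ->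
  `|wab a b z * Delta2 f s y| `^ q <=
  2 `^ (q - 1) * `|wab (q * a) (q * b) z * Delta2 (fun x => f x `^ q) s y| `^ 1.
Proof.
move=> s0 yl yr zin; rewrite powRr1 //.
case def : ((-1 <= y - s) && (y + s <= 1)); last first.
  by rewrite /Delta2 def !mulr0 normr0 powR0 ?gt_eqF // mulr0.
have /andP[z1 z2] := zin def.
have wab0 (a' b' : R) : 0 <= wab a' b' z by rewrite /wab mulr_ge0 ?powR_ge0.
rewrite (normrM (wab a b z)) (normrM (wab (q * a) _ z)).
rewrite [`|wab a b z|]ger0_norm // [`|wab _ _ z|]ger0_norm //.
rewrite powRM ?normr_ge0 // wab_powR ?z1 //.
by rewrite mulrCA ler_wpM2l // Delta2_powR_le.
Qed.

Lemma LqS_wab_Delta2_le (a b : R) (S N : set R) (step center : R -> R) :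
  finite_set N -> (forall x, 0 <= step x) ->
  (forall x, ~ N x -> center x - step x != -1 /\ center x + step x != 1) ->
  (forall x, (-1 <= center x - step x) && (center x + step x <= 1) -> -1 <= x <= 1) ->
  (LqS S q (fun x => (wab a b x * Delta2 f (step x) (center x))%R) <=
   ((2 `^ (q - 1)) `^ q^-1)%:E *
   LqS S 1 (fun x => (wab (q * a) (q * b) x *
                      Delta2 (fun x => f x `^ q) (step x) (center x))%R) `^ q^-1)%E.
Proof.
move=> fN step0 off_N defined_in; have K0 : 0 < 2 `^ (q - 1) :> R by rewrite powR_gt0.
apply: (LqS_le_off_finite S q_gt0 K0 fN) => x /off_N[l r].
exact: wab_Delta2_powR_le (step0 x) l r (defined_in x).
Qed.

Lemma inW_powR (a b : R) : inW q a b f -> inW 1 (q * a) (q * b) (fun x => f x `^ q).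
Proof.
have q_inv_neq0 : q^-1 != 0 by rewrite invr_neq0 ?gt_eqF.
rewrite /inW /LqS invr1 poweRe1 => [/(lty_poweRy q_inv_neq0)|]; last first.
  by apply: integral_ge0 => x _; rewrite lee_fin powR_ge0.
congr (_ < _)%E; apply: eq_integral => x; rewrite inE /= in_itv /= => x_in.
have w0 : 0 <= wab a b x by rewrite /wab mulr_ge0 ?powR_ge0.
rewrite powRr1 // normrM [`|wab _ _ x|]ger0_norm -?wab_powR //.
have fx0 := f_ge0 x_in.
by rewrite (ger0_norm fx0) powRM // ger0_norm // mulr_ge0 ?powR_ge0.
Qed.

Lemma Omega2_powR_le (a b delta : R) :
  (Omega2 (wab a b) q f delta <= ((2 `^ (q - 1)) `^ q^-1)%:E *
     Omega2 (wab (q * a) (q * b)) 1 (fun x => (f x `^ q)%R) delta `^ q^-1)%E.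
Proof.
apply: ereal_sup_le_powe => [||h _|h];
  rewrite ?LqS_ge0 ?powR_gt0 ?invr_ge0 ?(ltW q_gt0) // /= in_itv /= => /andP[h0 _].
have step0 x : 0 <= h * phi x by rewrite mulr_ge0 ?(ltW h0) ?sqrtr_ge0.
apply: (@LqS_wab_Delta2_le _ _ _ _ _ (fun x => x) (finite_set4 _ _ _ _) step0) => [x|x /andP[l r]].
  exact: phi_step_interior.
by move: (step0 x) => s0; apply/andP; split; lra.
Qed.

Lemma Omega2f_powR_le (a b delta : R) :
  (Omega2f (wab a b) q f delta <= ((2 `^ (q - 1)) `^ q^-1)%:E *
     Omega2f (wab (q * a) (q * b)) 1 (fun x => (f x `^ q)%R) delta `^ q^-1)%E.
Proof.
apply: ereal_sup_le_powe => [||h _|h];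
  rewrite ?LqS_ge0 ?powR_gt0 ?invr_ge0 ?(ltW q_gt0) // /= in_itv /= => /andP[h0 _].
rewrite /Delta2f; apply: (@LqS_wab_Delta2_le _ _ _ _ _ (fun x => x + h)
  (finite_set2 (-1) (1 - 2 * h)) (fun=> ltW h0)) => [x|x /andP[l r]].
  by move=> off; split; apply/eqP => e; apply: off; [left | right]; rewrite /=; lra.
by apply/andP; split; lra.
Qed.

Lemma Omega2b_powR_le (a b delta : R) :
  (Omega2b (wab a b) q f delta <= ((2 `^ (q - 1)) `^ q^-1)%:E *
     Omega2b (wab (q * a) (q * b)) 1 (fun x => (f x `^ q)%R) delta `^ q^-1)%E.
Proof.
apply: ereal_sup_le_powe => [||h _|h];
  rewrite ?LqS_ge0 ?powR_gt0 ?invr_ge0 ?(ltW q_gt0) // /= in_itv /= => /andP[h0 _].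
rewrite /Delta2b; apply: (@LqS_wab_Delta2_le _ _ _ _ _ (fun x => x - h)
  (finite_set2 (-1 + 2 * h) 1) (fun=> ltW h0)) => [x|x /andP[l r]].
  by move=> off; split; apply/eqP => e; apply: off; [left | right]; rewrite /=; lra.
by apply/andP; split; lra.
Qed.

End ConvexPower.

Theorem lemma4p5 (R : realType) (q a b : R) :
  1 < q ->
  exists c : R, 0 < c /\
    forall f : R -> R,
      M2 f ->
      (forall x : R, -1 <= x <= 1 -> 0 <= f x) ->
      inW q a b f ->
      [/\ M2 (fun x => f x `^ q),
          inW 1 (q * a) (q * b) (fun x => f x `^ q) &
          forall delta : R, 0 < delta ->
            (omega2 (wab a b) q f delta <=
             c%:E * (omega2 (wab (q * a) (q * b)) 1 (fun x => (f x `^ q)%R) delta) `^ q^-1)%E].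
Proof.
move=> /ltW q_ge1; have q_gt0 : 0 < q by rewrite (lt_le_trans _ q_ge1).
exists (3 * (2 `^ (q - 1)) `^ q^-1); split; first by rewrite mulr_gt0 ?powR_gt0.
move=> f f_convex f_ge0 fW; split; [exact: M2_powR | exact: inW_powR |].
move=> delta delta_gt0; have delta8_gt0 : 0 < 8 * delta ^+ 2 by rewrite mulr_gt0 ?exprn_gt0.
have in_delta : `]0, delta]%classic delta by rewrite /= in_itv /= delta_gt0 lexx.
have in_delta8 : `]0, 8 * delta ^+ 2]%classic (8 * delta ^+ 2).
  by rewrite /= in_itv /= delta8_gt0 lexx.
apply: adde3_le_powe; rewrite ?powR_gt0 ?invr_ge0 ?(ltW q_gt0) //.
- exact: ereal_sup_ge0 in_delta (fun=> LqS_ge0 _ _ _).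
- exact: ereal_sup_ge0 in_delta8 (fun=> LqS_ge0 _ _ _).
- exact: ereal_sup_ge0 in_delta8 (fun=> LqS_ge0 _ _ _).
- exact: Omega2_powR_le.
- exact: Omega2f_powR_le.
- exact: Omega2b_powR_le.
Qed.
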